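(* Let $A$ be a Lagrange tensor along $c$ with base point $t_0$ and $W\subset E_{t_0}$ a $p$-dimensional subspace. At every regular point $t$, with $g=g_W$, $$p\,\frac{g''}{g}=\frac1p(\operatorname{tr}S_1)^2-\operatorname{tr}(S_1^2)-3\operatorname{tr}(S_2^TS_2)-\sum_{i=1}^p\langle R_tw_i,w_i\rangle,$$ where $W_t=A_t^{-*}W\subset E_t$, $w_1,\dots,w_p$ is an orthonormal basis of $W_t$, and $S_1:W_t\to W_t$, $S_2:W_t\to W_t^\perp$ are defined by $S_tw=S_1w+S_2w$ for $w\in W_t$ (orthogonal projections of $S_tw$ to $W_t$ and $W_t^\perp$).
   Context: Setting: $(M^{n+1},g)$ is a Riemannian manifold and $c:I\to M$ a unit-speed geodesic. $E_t=\dot c(t)^\perp\subset T_{c(t)}M$, $R_t(x)=R(x,\dot c)\dot c$ on $E_t$, and $'$ is $\nabla_{\dot c}$. A Lagrange tensor with base point $t_0\in I$ is a smooth family of linear maps $A_t:E_{t_0}\to E_t$ with $A_t''+R_tA_t=0$, $\ker A_{t_0}\cap\ker A'_{t_0}=0$ and $\langle A_t'v,A_tw\rangle=\langle A_tv,A_t'w\rangle$ for all $t$, $v,w\in E_{t_0}$. $t$ is regular if $A_t$ is invertible; there $S_t=A_t'A_t^{-1}$ (self-adjoint). $A_t^{-*}=(A_t^* )^{-1}$ where $A_t^*$ is the adjoint. For a $p$-dimensional $W\subset E_{t_0}$ with orthonormal basis $e_1,\dots,e_p$, $(M_t)_{ij}=\langle A_t^{-*}e_i,A_t^{-*}e_j\rangle$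 and $g_W(t)=(\det M_t)^{-1/(2p)}$ at regular $t$. *)

From Stdlib Require Import Reals.
Open Scope R_scope.

(* Everything is expressed in a parallel orthonormal frame along the geodesic c,
   identifying each E_t (and E_{t0}) with R^n; vectors/matrices are indexed by
   nat and only indices < n are meaningful. *)
Definition vec := nat -> R.
Definition mat := nat -> nat -> R.

Fixpoint rsum (n : nat) (f : nat -> R) : R :=
  match n with O => 0 | S m => rsum m f + f m end.

Definition inner (n : nat) (u v : vec) : R := rsum n (fun i => u i * v i).
Definition mv (n : nat) (M : mat) (v : vec) : vec :=
  fun i => rsum n (fun k => M i k * v k).
Definition mm (n : nat) (M N : mat) : mat :=
  fun i j => rsum n (fun k => M i k * N k j).
Definition transp (M : mat) : mat := fun i j => M j i.

Definition skip (i k : nat) : nat := if Nat.ltb k i then k else S k.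
Definition minor (M : mat) (i j : nat) : mat := fun a b => M (skip i a) (skip j b).
Fixpoint det (n : nat) (M : mat) : R :=
  match n with
  | O => 1
  | S m => rsum (S m) (fun j => (-1) ^ j * M O j * det m (minor M O j))
  end.

(* adjugate and inverse (meaningful when det <> 0) *)
Definition adj (n : nat) (M : mat) : mat :=
  fun i j => (-1) ^ (i + j) * det (Nat.pred n) (minor M j i).
Definition inv (n : nat) (M : mat) : mat := fun i j => adj n M i j / det n M.

Definition Ainvstar (n : nat) (A : R -> mat) (t : R) : mat := inv n (transp (A t)).

Definition Sop (n : nat) (A A1 : R -> mat) (t : R) : mat := mm n (A1 t) (inv n (A t)).

Definition Mgram (n p : nat) (A : R -> mat) (e : nat -> vec) (t : R) : mat :=
  fun i j => inner n (mv n (Ainvstar n A t) (e i)) (mv n (Ainvstar n A t) (e j)).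
Definition gW (n p : nat) (A : R -> mat) (e : nat -> vec) (t : R) : R :=
  Rpower (det p (Mgram n p A e t)) (- / (2 * INR p)).

Definition orthonormal (n p : nat) (v : nat -> vec) : Prop :=
  forall i j, (i < p)%nat -> (j < p)%nat ->
    inner n (v i) (v j) = if Nat.eqb i j then 1 else 0.

Definition in_span (n p : nat) (v : nat -> vec) (x : vec) : Prop :=
  exists c : nat -> R, forall k, (k < n)%nat -> x k = rsum p (fun j => c j * v j k).

Definition proj (n p : nat) (w : nat -> vec) (x : vec) : vec :=
  fun k => rsum p (fun j => inner n x (w j) * w j k).

Definition S1op (n p : nat) (w : nat -> vec) (S : mat) (x : vec) : vec :=
  proj n p w (mv n S x).
Definition S2op (n p : nat) (w : nat -> vec) (S : mat) (x : vec) : vec :=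
  fun k => mv n S x k - proj n p w (mv n S x) k.

Definition trace_on (n p : nat) (w : nat -> vec) (T : vec -> vec) : R :=
  rsum p (fun i => inner n (T (w i)) (w i)).

(* tr(S1), tr(S1^2), tr(S2^T S2) = sum_i <S2^T S2 w_i, w_i> = sum_i |S2 w_i|^2 *)
Definition trS1 n p w S := trace_on n p w (S1op n p w S).
Definition trS1sq n p w S := trace_on n p w (fun x => S1op n p w S (S1op n p w S x)).
Definition trS2TS2 n p w S := rsum p (fun i => inner n (S2op n p w S (w i)) (S2op n p w S (w i))).

(** Put [B s = A_s^{-*}] and [u_k s = B s A_t^* w_k], so that [u_k t = w_k].  Differentiating
    [B A^* = 1] gives [B' = - B A'^* B]; the Lagrange condition makes [S_t] self-adjoint with
    [B_t A_t'^* = S_t], hence [u_k' t = - S_t w_k], and the Jacobi equation then gives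
    [u_k'' t = 2 S_t^2 w_k + R_t w_k].  Both [A_t^{-*} e_j] and [w_k] span [W_t], so [det M_s] is a
    positive multiple of the Gram determinant [h s] of the [u_k s], and [h t = 1].  By Jacobi's
    formula [h' t = tr N'] and [h'' t = tr N'' + (tr N')^2 - tr (N'^2)] for the Gram matrix [N] of
    the [u_k], whose derivatives at [t] are read off from those of [u_k]; finally
    [(h^c)'' / h^c = c h'' + c (c - 1) h'^2] at [h = 1], with [c = -1/(2p)]. *)

From Pilot Require Import Defs.
From Stdlib Require Import Reals Lra Lia FunctionalExtensionality ClassicalEpsilon.
From mathcomp Require all_boot all_algebra Rstruct zify.
Open Scope R_scope.

(* MathComp is imported only inside this module: its [nat_scope] notations would change the
   meaning of [(i < n)%nat] in the final statement.  [Defs] is re-imported last so that its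
   [det], [inv], ... shadow MathComp's homonyms. *)
Module LagrangeGram.
Import all_boot all_algebra Rstruct zify GRing.Theory Defs.

Definition delta (i j : nat) : R := if Nat.eqb i j then 1 else 0.
Definition madd (X Y : mat) : mat := fun i j => X i j + Y i j.
Definition mopp (X : mat) : mat := fun i j => - X i j.

Lemma rsum_ext n f g : (forall k, (k < n)%N -> f k = g k) -> rsum n f = rsum n g.
Proof. by elim: n => [|n IH] H //=; rewrite IH ?H // => k hk; apply: H; lia. Qed.

Lemma rsum_plus n f g : rsum n (fun k => f k + g k) = rsum n f + rsum n g.
Proof. by elim: n => [|n IH] /=; [ring | rewrite IH; ring]. Qed.

Lemma rsum_minus n f g : rsum n (fun k => f k - g k) = rsum n f - rsum n g.
Proof. by elim: n => [|n IH] /=; [ring | rewrite IH; ring]. Qed.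

Lemma rsum_scal n c f : rsum n (fun k => c * f k) = c * rsum n f.
Proof. by elim: n => [|n IH] /=; [ring | rewrite IH; ring]. Qed.

Lemma rsum0 n : rsum n (fun _ => 0) = 0.
Proof. by elim: n => [|n IH] /=; [ring | rewrite IH; ring]. Qed.

Lemma rsum_swap n m (f : nat -> nat -> R) :
  rsum n (fun i => rsum m (fun j => f i j)) = rsum m (fun j => rsum n (fun i => f i j)).
Proof. by elim: n => [|n IH] /=; [rewrite rsum0 | rewrite IH -rsum_plus]. Qed.

Lemma rsum_delta n f i : (i < n)%N -> rsum n (fun j => f j * delta j i) = f i.
Proof.
elim: n => [|n IH] hi //=; rewrite /delta.
case: (Nat.eqb_spec n i) => [<-|ne].
- rewrite (rsum_ext _ _ (fun _ => 0)) ?rsum0; first ring.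
  by move=> k hk; case: (Nat.eqb_spec k n) => E; [lia | ring].
- rewrite IH; [ring | lia].
Qed.

Lemma rsum_delta_l n f i : (i < n)%N -> rsum n (fun j => delta i j * f j) = f i.
Proof.
move=> hi; rewrite -(rsum_delta n f i hi); apply: rsum_ext => k _.
by rewrite /delta Nat.eqb_sym; ring.
Qed.

Local Open Scope ring_scope.

Ltac Rops_to_ring := rewrite ?RplusE ?RmultE ?RminusE ?RoppE ?RinvE ?RdivE ?R0E ?R1E.

Definition mx n (M : mat) : 'M[R]_n := \matrix_(i < n, j < n) M i j.
Definition cv n (v : vec) : 'cV[R]_n := \col_(i < n) v i.

Lemma rsum_big n f : rsum n f = \sum_(i < n) f i.
Proof. by elim: n => [|n IH] /=; rewrite ?big_ord0 // big_ord_recr /= IH. Qed.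

Lemma mx_ext n X Y :
  (forall i j, (i < n)%N -> (j < n)%N -> X i j = Y i j) -> mx n X = mx n Y.
Proof. by move=> H; apply/matrixP => i j; rewrite !mxE H. Qed.

Lemma mx_inj n X Y : mx n X = mx n Y ->
  forall i j, (i < n)%N -> (j < n)%N -> X i j = Y i j.
Proof. by move/matrixP=> H i j hi hj; move: (H (Ordinal hi) (Ordinal hj)); rewrite !mxE. Qed.

Lemma cv_inj n u v : cv n u = cv n v -> forall i, (i < n)%N -> u i = v i.
Proof. by move/matrixP=> H i hi; move: (H (Ordinal hi) ord0); rewrite !mxE. Qed.

Lemma mx_mm n X Y : mx n (mm n X Y) = mx n X *m mx n Y.
Proof. by apply/matrixP => i j; rewrite !mxE /mm rsum_big; apply: eq_bigr => k _; rewrite !mxE. Qed.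

Lemma mx_transp n X : mx n (transp X) = (mx n X)^T.
Proof. by apply/matrixP => i j; rewrite !mxE. Qed.

Lemma mx_delta n c : mx n (fun i j => Rmult c (delta i j)) = c%:M.
Proof.
apply/matrixP => i j; rewrite !mxE /delta.
case: (Nat.eqb_spec i j) => E; Rops_to_ring.
- have -> : i = j by apply: val_inj.
  by rewrite eqxx mulr1.
- have -> : (i == j) = false by apply/negbTE/eqP => E'; apply: E; rewrite E'.
  by rewrite mulr0.
Qed.

Lemma cv_mv n M v : cv n (mv n M v) = mx n M *m cv n v.
Proof. by apply/matrixP => i j; rewrite !mxE /mv rsum_big; apply: eq_bigr => k _; rewrite !mxE. Qed.

Lemma skip_bump i k : skip i k = bump i k.
Proof.
rewrite /skip /bump; case: (Nat.ltb_spec k i) => H.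
- by have -> : (i <= k)%N = false by apply/negbTE; rewrite -ltnNge; apply/ltP.
- by have -> : (i <= k)%N = true by apply/leP.
Qed.

Lemma mx_minor m (M : mat) (i j : 'I_m.+1) :
  row' i (col' j (mx m.+1 M)) = mx m (minor M i j).
Proof. by apply/matrixP => a b; rewrite !mxE /minor !skip_bump. Qed.

Lemma det_mx n M : det n M = \det (mx n M).
Proof.
elim: n M => [|m IH] M; first by rewrite det_mx00.
cbn [det]; rewrite (expand_det_row _ ord0) rsum_big; apply: eq_bigr => j _.
rewrite /cofactor mx_minor -IH !mxE /= add0n RpowE; Rops_to_ring.
by rewrite mulrCA mulrA.
Qed.

Lemma mx_adj n M : mx n (adj n M) = \adj (mx n M).
Proof.
case: n => [|m]; first by apply/matrixP => [[]].
apply/matrixP => i j; rewrite !mxE /cofactor /adj /= mx_minor -det_mx RpowE addnC.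
by Rops_to_ring.
Qed.

Lemma mx_inv n M : det n M <> 0 -> mx n (inv n M) = invmx (mx n M).
Proof.
move=> H; rewrite /invmx unitmxE unitfE -det_mx.
have -> : (det n M != 0) = true by apply/eqP.
apply/matrixP => i j; move/matrixP: (mx_adj n M) => /(_ i j).
by rewrite !mxE /inv => <-; Rops_to_ring; rewrite mulrC.
Qed.

Lemma det_transp n X : det n (transp X) = det n X.
Proof. by rewrite !det_mx mx_transp det_tr. Qed.

Lemma mx_madd n X Y : mx n (madd X Y) = mx n X + mx n Y.
Proof. by apply/matrixP => i j; rewrite !mxE. Qed.

Lemma mx_mopp n X : mx n (mopp X) = - mx n X.
Proof. by apply/matrixP => i j; rewrite !mxE. Qed.

Lemma mx_sym n X : (forall i j, (i < n)%N -> (j < n)%N -> X i j = X j i) -> (mx n X)^T = mx n X.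
Proof. by move=> H; apply/matrixP => i j; rewrite !mxE H. Qed.

Definition replace_row (X : mat) (k : nat) (Y : mat) : mat :=
  fun i j => if Nat.eqb i k then Y i j else X i j.

Lemma det_replace_row n X k Y : (k < n)%N ->
  det n (replace_row X k Y) = rsum n (fun j => Rmult (Y k j) (adj n X j k)).
Proof.
move=> hk; rewrite det_mx (expand_det_row _ (Ordinal hk)) rsum_big.
apply: eq_bigr => j _; rewrite mxE /replace_row Nat.eqb_refl; congr (_ * _).
move/matrixP: (mx_adj n X) => /(_ j (Ordinal hk)); rewrite mxE => ->.
rewrite mxE /cofactor; congr (_ * \det _); apply/matrixP => a b; rewrite !mxE /replace_row.
case: (Nat.eqb_spec (lift (Ordinal hk) a) k) => // E.
by case/eqP: (neq_lift (Ordinal hk) a); apply: val_inj.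
Qed.

Local Close Scope ring_scope.

(** * Derivatives of determinants and inverses *)

Lemma derivable_pt_lim_ext f g x l :
  (forall s, f s = g s) -> derivable_pt_lim f x l -> derivable_pt_lim g x l.
Proof. by move=> /functional_extensionality ->. Qed.

Lemma derivable_pt_lim_eq f x l l' : l = l' -> derivable_pt_lim f x l -> derivable_pt_lim f x l'.
Proof. by move=> ->. Qed.

Lemma derivable_pt_lim_mul f g f' g' x :
  derivable_pt_lim f x f' -> derivable_pt_lim g x g' ->
  derivable_pt_lim (fun s => f s * g s) x (f' * g x + f x * g').
Proof. exact: derivable_pt_lim_mult. Qed.

Lemma derivable_pt_lim_scal_l c f f' x :
  derivable_pt_lim f x f' -> derivable_pt_lim (fun s => c * f s) x (c * f').
Proof.
move=> H; apply: derivable_pt_lim_eq (derivable_pt_lim_mul _ _ _ _ _ (derivable_pt_lim_const c x) H).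
by rewrite /fct_cte; ring.
Qed.

Lemma derivable_pt_lim_rsum n (f : nat -> R -> R) f' x :
  (forall k, (k < n)%N -> derivable_pt_lim (f k) x (f' k)) ->
  derivable_pt_lim (fun s => rsum n (fun k => f k s)) x (rsum n f').
Proof.
elim: n => [|n IH] H /=; first exact: derivable_pt_lim_const.
have H1 : derivable_pt_lim (fun s => rsum n (fun k => f k s)) x (rsum n f').
  by apply: IH => k hk; apply: H; lia.
exact: (derivable_pt_lim_plus _ _ _ _ _ H1 (H n (ltnSn n))).
Qed.

Definition is_derive_mat n (F : R -> mat) (F' : mat) (x : R) : Prop :=
  forall i j, (i < n)%N -> (j < n)%N -> derivable_pt_lim (fun s => F s i j) x (F' i j).

Definition is_derive_vec n (V : R -> vec) (V' : vec) (x : R) : Prop :=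
  forall i, (i < n)%N -> derivable_pt_lim (fun s => V s i) x (V' i).

Lemma is_derive_mat_minor m F F' x i j : is_derive_mat m.+1 F F' x ->
  is_derive_mat m (fun s => minor (F s) i j) (minor F' i j) x.
Proof. by move=> H a b ha hb; apply: H; rewrite /skip; case: Nat.ltb_spec => _; lia. Qed.

Lemma is_derive_mat_transp n F F' x :
  is_derive_mat n F F' x -> is_derive_mat n (fun s => transp (F s)) (transp F') x.
Proof. by move=> H i j hi hj; apply: H. Qed.

Lemma is_derive_mat_mm n F G F' G' x : is_derive_mat n F F' x -> is_derive_mat n G G' x ->
  is_derive_mat n (fun s => mm n (F s) (G s)) (madd (mm n F' (G x)) (mm n (F x) G')) x.
Proof.
move=> HF HG i j hi hj; rewrite /madd /mm -rsum_plus.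
by apply: derivable_pt_lim_rsum => k hk; apply: derivable_pt_lim_mul; [apply: HF | apply: HG].
Qed.

Lemma is_derive_mat_opp n F F' x : is_derive_mat n F F' x ->
  is_derive_mat n (fun s => mopp (F s)) (mopp F') x.
Proof. by move=> H i j hi hj; apply: derivable_pt_lim_opp; apply: H. Qed.

Lemma is_derive_mv n F F' z x :
  is_derive_mat n F F' x -> is_derive_vec n (fun s => mv n (F s) z) (mv n F' z) x.
Proof.
move=> H i hi; apply: derivable_pt_lim_rsum => k hk.
apply: derivable_pt_lim_eq (derivable_pt_lim_mul _ _ _ _ _ (H i k hi hk) (derivable_pt_lim_const (z k) x)).
by rewrite /fct_cte; ring.
Qed.

Lemma derivable_pt_lim_inner n U V U' V' x : is_derive_vec n U U' x -> is_derive_vec n V V' x ->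
  derivable_pt_lim (fun s => inner n (U s) (V s)) x (inner n U' (V x) + inner n (U x) V').
Proof.
move=> HU HV; rewrite /inner -rsum_plus.
by apply: derivable_pt_lim_rsum => k hk; apply: derivable_pt_lim_mul; [apply: HU | apply: HV].
Qed.

Lemma derivable_pt_lim_det n : forall F F' x, is_derive_mat n F F' x ->
  derivable_pt_lim (fun s => det n (F s)) x (rsum n (fun k => det n (replace_row (F x) k F'))).
Proof.
elim: n => [|m IH] F F' x H; first exact: derivable_pt_lim_const.
have Hj j : (j < m.+1)%N -> derivable_pt_lim
    (fun s => (-1) ^ j * F s O j * det m (minor (F s) O j)) x
    ((-1) ^ j * F' O j * det m (minor (F x) O j) +
     (-1) ^ j * F x O j * rsum m (fun k => det m (replace_row (minor (F x) O j) k (minor F' O j)))).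
  move=> hj; apply: derivable_pt_lim_eq (derivable_pt_lim_mul _ _ _ _ _
    (derivable_pt_lim_scal_l ((-1) ^ j) _ _ _ (H O j (ltn0Sn m) hj))
    (IH _ _ _ (is_derive_mat_minor _ _ _ _ O j H))); ring.
apply: derivable_pt_lim_eq (derivable_pt_lim_rsum m.+1 _ _ x Hj).
have rsum_recl f : rsum m.+1 f = f O + rsum m (fun k => f k.+1).
  by elim: m {IH Hj H} => [|m IHm] /=; [ring | rewrite /= in IHm; rewrite IHm; ring].
rewrite (rsum_recl (fun k => det m.+1 (replace_row (F x) k F'))) rsum_plus; congr (_ + _).
rewrite rsum_swap; apply: rsum_ext => j _; rewrite -rsum_scal; apply: rsum_ext => k _.
by [].
Qed.

Definition adj_derivative n (F : R -> mat) (F' : mat) (x : R) : mat := fun i j =>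
  (-1) ^ (i + j) * rsum n.-1 (fun k => det n.-1 (replace_row (minor (F x) j i) k (minor F' j i))).

Lemma is_derive_adj n F F' x : is_derive_mat n F F' x ->
  is_derive_mat n (fun s => adj n (F s)) (adj_derivative n F F' x) x.
Proof.
case: n => [|m] H i j hi hj //.
by apply: derivable_pt_lim_scal_l; apply: derivable_pt_lim_det; apply: is_derive_mat_minor.
Qed.

Lemma adj_mul n X i j : (i < n)%N -> (j < n)%N ->
  mm n (adj n X) X i j = det n X * delta i j.
Proof.
move=> hi hj; apply: (mx_inj n (mm n (adj n X) X) (fun i j => det n X * delta i j)) => //.
by rewrite mx_mm mx_adj mul_adj_mx mx_delta det_mx.
Qed.

(* Differentiate the identity [adj X * X = det X * I], which holds everywhere. *)
Lemma adj_mul_derivative n F F' x : is_derive_mat n F F' x ->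
  forall i j, (i < n)%N -> (j < n)%N ->
  rsum n (fun k => adj_derivative n F F' x i k * F x k j + adj n (F x) i k * F' k j) =
  rsum n (fun k => det n (replace_row (F x) k F')) * delta i j.
Proof.
move=> H i j hi hj.
have H1 := is_derive_mat_mm _ _ _ _ _ _ (is_derive_adj _ _ _ _ H) H i j hi hj.
have H2 : derivable_pt_lim (fun s => mm n (adj n (F s)) (F s) i j) x
    (rsum n (fun k => det n (replace_row (F x) k F')) * delta i j).
  apply: (derivable_pt_lim_ext (fun s => det n (F s) * delta i j)) => [s|].
    by rewrite adj_mul.
  apply: derivable_pt_lim_eq (derivable_pt_lim_mul _ _ _ _ _
    (derivable_pt_lim_det _ _ _ _ H) (derivable_pt_lim_const (delta i j) x)).
  by rewrite /fct_cte; ring.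
by rewrite -(uniqueness_limite _ _ _ _ H1 H2) /madd /mm -rsum_plus.
Qed.

Section QuotientRule.
Local Open Scope ring_scope.

Lemma quotient_rule_invmx n (X K P : 'M[R]_n) (d' : R) : \det X != 0 ->
  K *m X + \adj X *m P = d'%:M ->
  (\det X)^-1 *: K - (d' / (\det X * \det X)) *: \adj X = - (invmx X *m P *m invmx X).
Proof.
move=> hd key; have hu : X \in unitmx by rewrite unitmxE unitfE.
set d := \det X; set iX := invmx X.
have hA : \adj X = d *: iX by rewrite /iX /invmx hu scalerA mulfV // scale1r.
have hK : K = d' *: iX - d *: (iX *m P *m iX).
  rewrite -(mulmxK hu K).
  have -> : K *m X = d'%:M - \adj X *m P by rewrite -key addrK.
  by rewrite mulmxBl mul_scalar_mx hA -!scalemxAl.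
rewrite hK hA !scalerBr !scalerA mulVf // scale1r.
have -> : d' / (d * d) * d = d^-1 * d' by rewrite invfM mulrA mulfVK // mulrC.
by rewrite addrAC subrr add0r.
Qed.

End QuotientRule.

Lemma is_derive_inv n F F' x : is_derive_mat n F F' x -> det n (F x) <> 0 ->
  is_derive_mat n (fun s => inv n (F s))
    (mopp (mm n (mm n (inv n (F x)) F') (inv n (F x)))) x.
Proof.
move=> H hd i j hi hj.
apply: derivable_pt_lim_eq (derivable_pt_lim_div _ _ _ _ _
  (is_derive_adj _ _ _ _ H i j hi hj) (derivable_pt_lim_det _ _ _ _ H) hd).
have key : (mx n (adj_derivative n F F' x) *m mx n (F x) + \adj (mx n (F x)) *m mx n F' =
    (rsum n (fun k => det n (replace_row (F x) k F')))%:M)%R.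
  rewrite -mx_adj -!mx_mm -mx_delta; apply/matrixP => a b; rewrite !mxE -RplusE /mm -rsum_plus.
  exact: adj_mul_derivative.
have hdm : (\det (mx n (F x)) != 0)%R by rewrite -det_mx; apply/eqP.
have := quotient_rule_invmx _ _ _ _ _ hdm key.
rewrite -(mx_inv _ _ hd) -!mx_mm -mx_adj -det_mx.
move/matrixP => /(_ (Ordinal hi) (Ordinal hj)); rewrite !mxE /= /mopp RoppE => <-.
by rewrite -!RinvE -!RmultE -RminusE /Rsqr; field.
Qed.

Lemma derivable_pt_lim_det_adj n F F' x : is_derive_mat n F F' x ->
  derivable_pt_lim (fun s => det n (F s)) x
    (rsum n (fun k => rsum n (fun j => F' k j * adj n (F x) j k))).
Proof.
move=> H; apply: derivable_pt_lim_eq (derivable_pt_lim_det _ _ _ _ H).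
by apply: rsum_ext => k hk; rewrite det_replace_row.
Qed.

Lemma adj_delta p X j k : (forall i l, (i < p)%N -> (l < p)%N -> X i l = delta i l) ->
  (j < p)%N -> (k < p)%N -> adj p X j k = delta j k.
Proof.
move=> HX hj hk; have mxX : mx p X = 1%:M%R.
  by rewrite -R1E -mx_delta; apply: mx_ext => i l hi hl; rewrite HX //; ring.
rewrite -[delta j k]Rmult_1_l.
by apply: (mx_inj p _ (fun j k => 1 * delta j k)) => //; rewrite mx_adj mxX adj1 mx_delta.
Qed.

Lemma rsum_adj_delta p X Y k : (forall i l, (i < p)%N -> (l < p)%N -> X i l = delta i l) ->
  (k < p)%N -> rsum p (fun j => Y k j * adj p X j k) = Y k k.
Proof.
move=> HX hk; rewrite (rsum_ext _ _ (fun j => Y k j * delta j k)) ?rsum_delta // => j hj.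
by rewrite (adj_delta _ _ _ _ HX).
Qed.

Lemma adj_derivative_at_id p N N' t : is_derive_mat p N N' t ->
  (forall i j, (i < p)%N -> (j < p)%N -> N t i j = delta i j) ->
  forall j k, (j < p)%N -> (k < p)%N ->
  adj_derivative p N N' t j k = rsum p (fun m => N' m m) * delta j k - N' j k.
Proof.
move=> HN Nt j k hj hk; have := adj_mul_derivative _ _ _ _ HN j k hj hk.
have -> : rsum p (fun m => det p (replace_row (N t) m N')) = rsum p (fun m => N' m m).
  by apply: rsum_ext => m hm; rewrite det_replace_row // (rsum_adj_delta _ _ _ _ Nt).
move=> <-; rewrite (rsum_ext _ _ (fun m =>
  adj_derivative p N N' t j m * delta m k + delta j m * N' m k)).
  by rewrite rsum_plus rsum_delta // rsum_delta_l //; ring.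
by move=> m hm; rewrite Nt // (adj_delta _ _ _ _ Nt).
Qed.

Lemma det_second_derivative_at_id p (N N1 : R -> mat) (N2 : mat) (P : R -> Prop) t :
  P t -> (forall i j, (i < p)%N -> (j < p)%N -> N t i j = delta i j) ->
  (forall s, P s -> is_derive_mat p N (N1 s) s) -> is_derive_mat p N1 N2 t ->
  exists h1 : R -> R,
    (forall s, P s -> derivable_pt_lim (fun s => det p (N s)) s (h1 s)) /\
    h1 t = rsum p (fun k => N1 t k k) /\
    derivable_pt_lim h1 t (rsum p (fun k => N2 k k) + rsum p (fun k => N1 t k k) ^ 2
                           - rsum p (fun k => rsum p (fun j => N1 t k j * N1 t j k))).
Proof.
move=> Pt Nt HN HN1; set tr1 := rsum p (fun k => N1 t k k).
exists (fun s => rsum p (fun k => rsum p (fun j => N1 s k j * adj p (N s) j k))).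
split; [|split].
- by move=> s Ps; apply: derivable_pt_lim_det_adj; apply: HN.
- by apply: rsum_ext => k hk; rewrite (rsum_adj_delta _ _ _ _ Nt).
apply: derivable_pt_lim_eq (derivable_pt_lim_rsum _ _ _ _ (fun k hk =>
  derivable_pt_lim_rsum _ _ _ _ (fun j hj => derivable_pt_lim_mul _ _ _ _ _
    (HN1 k j hk hj) (is_derive_adj _ _ _ _ (HN t Pt) j k hj hk)))).
rewrite (rsum_ext _ _ (fun k => N2 k k + (tr1 * N1 t k k - rsum p (fun j => N1 t k j * N1 t j k)))).
  by rewrite rsum_plus rsum_minus rsum_scal /tr1; ring.
move=> k hk; rewrite rsum_plus (rsum_adj_delta _ _ _ _ Nt) //; congr (_ + _).
rewrite (rsum_ext _ _ (fun j => tr1 * (N1 t k j * delta j k) - N1 t k j * N1 t j k)).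
  by rewrite rsum_minus rsum_scal rsum_delta.
by move=> j hj; rewrite (adj_derivative_at_id _ _ _ _ (HN t Pt) Nt) // -/tr1; ring.
Qed.

(** * Powers of a positive function *)

Lemma derivable_pt_lim_pos_near f x l : derivable_pt_lim f x l -> 0 < f x ->
  exists d, 0 < d /\ forall s, Rabs (s - x) < d -> 0 < f s.
Proof.
move=> H hp.
have [alp [ha Ha]] := derivable_continuous_pt f x (exist _ l H) (f x) hp.
exists alp; split => // s hs; case: (Req_dec s x) => [-> // | ne].
have : R_dist (f s) (f x) < f x by apply: Ha; split; [split; [exact: I | exact: not_eq_sym ne] | exact: hs].
by rewrite /R_dist => /Rabs_def2 [_ ?]; lra.
Qed.

Lemma derivable_pt_lim_neq0_near f x l : derivable_pt_lim f x l -> f x <> 0 ->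
  exists d, 0 < d /\ forall s, Rabs (s - x) < d -> f s <> 0.
Proof.
move=> H hn; case: (Rtotal_order (f x) 0) => [hs | [// | hs]].
- have [d [hd Hd]] := derivable_pt_lim_pos_near _ _ _ (derivable_pt_lim_opp _ _ _ H)
    ltac:(rewrite /opp_fct; lra).
  by exists d; split => // s /Hd; rewrite /opp_fct; lra.
- by have [d [hd Hd]] := derivable_pt_lim_pos_near _ _ _ H hs; exists d; split => // s /Hd; lra.
Qed.

Lemma Rpower_second_derivative (h h1 : R -> R) (h2 c t d : R) :
  0 < d -> 0 < h t ->
  (forall s, Rabs (s - t) < d -> derivable_pt_lim h s (h1 s)) -> derivable_pt_lim h1 t h2 ->
  exists (delta : R) (g1 : R -> R) (g2 : R), 0 < delta /\
    (forall s, Rabs (s - t) < delta -> derivable_pt_lim (fun s => Rpower (h s) c) s (g1 s)) /\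
    derivable_pt_lim g1 t g2 /\
    g2 = Rpower (h t) c * (c * (h2 * h t - h1 t ^ 2) / h t ^ 2 + (c * (h1 t / h t)) ^ 2).
Proof.
move=> hd ht Hh Hh1.
have Hht : derivable_pt_lim h t (h1 t) by apply: Hh; rewrite Rminus_diag_eq // Rabs_R0.
have [d' [hd' Hpos]] := derivable_pt_lim_pos_near _ _ _ Hht ht.
pose g1 s := Rpower (h s) c * (c * (h1 s / h s)).
exists (Rmin d d'), g1, (g1 t * (c * (h1 t / h t)) +
  Rpower (h t) c * (c * ((h2 * h t - h1 t * h1 t) / Rsqr (h t)))).
have Hg s : Rabs (s - t) < Rmin d d' -> derivable_pt_lim (fun s => Rpower (h s) c) s (g1 s).
  move=> hs; have hhs : 0 < h s by apply: Hpos; apply: Rlt_le_trans hs (Rmin_r _ _).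
  have Hs : derivable_pt_lim h s (h1 s) by apply: Hh; apply: Rlt_le_trans hs (Rmin_l _ _).
  have Hlog : derivable_pt_lim (fun x => c * ln (h x)) s (c * (/ h s * h1 s)).
    exact: derivable_pt_lim_scal_l (derivable_pt_lim_comp _ ln _ _ _ Hs (derivable_pt_lim_ln _ hhs)).
  apply: derivable_pt_lim_eq (derivable_pt_lim_comp _ exp _ _ _ Hlog (derivable_pt_lim_exp _)).
  by rewrite /g1 /Rpower; field; lra.
split; [exact: Rmin_glb_lt | split; [exact: Hg | split]].
- apply: (derivable_pt_lim_mul (fun s => Rpower (h s) c) (fun s => c * (h1 s / h s))).
    by apply: Hg; rewrite Rminus_diag_eq // Rabs_R0; exact: Rmin_glb_lt.
  apply: derivable_pt_lim_scal_l; apply: (derivable_pt_lim_div _ _ _ _ _ Hh1 Hht); lra.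
- by rewrite /g1 /Rsqr; field; lra.
Qed.

(** * Orthonormal frames *)

Lemma inner_sym n u v : inner n u v = inner n v u.
Proof. by apply: rsum_ext => k _; ring. Qed.

Lemma inner_ext n u u' v v' : (forall i, (i < n)%N -> u i = u' i) ->
  (forall i, (i < n)%N -> v i = v' i) -> inner n u v = inner n u' v'.
Proof. by move=> Hu Hv; apply: rsum_ext => k hk; rewrite Hu ?Hv. Qed.

Lemma inner_sum_l n p (c : nat -> R) (v : nat -> vec) y :
  inner n (fun k => rsum p (fun j => c j * v j k)) y = rsum p (fun j => c j * inner n (v j) y).
Proof.
rewrite /inner (rsum_ext _ _ (fun k => rsum p (fun j => c j * v j k * y k))).
  by rewrite rsum_swap; apply: rsum_ext => j _; rewrite -rsum_scal; apply: rsum_ext => k _; ring.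
by move=> k _; rewrite Rmult_comm -rsum_scal; apply: rsum_ext => j _; ring.
Qed.

Lemma inner_sub_l n u v y : inner n (fun k => u k - v k) y = inner n u y - inner n v y.
Proof. by rewrite /inner -rsum_minus; apply: rsum_ext => k _; ring. Qed.

Lemma inner_opp_l n u v : inner n (fun k => - u k) v = - inner n u v.
Proof.
rewrite /inner (rsum_ext _ _ (fun k => -1 * (u k * v k))) ?rsum_scal; first ring.
by move=> k _; ring.
Qed.

Lemma inner_mv_sym n S x y : (forall i j, (i < n)%N -> (j < n)%N -> S i j = S j i) ->
  inner n (mv n S x) y = inner n x (mv n S y).
Proof.
move=> H; rewrite /inner /mv (rsum_ext _ _ (fun i => rsum n (fun k => S i k * x k * y i))).
  rewrite rsum_swap; apply: rsum_ext => k hk.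
  by rewrite -rsum_scal; apply: rsum_ext => i hi; rewrite H //; ring.
by move=> i _; rewrite Rmult_comm -rsum_scal; apply: rsum_ext => k _; ring.
Qed.

Lemma orthonormal_delta n p w i j : orthonormal n p w -> (i < p)%N -> (j < p)%N ->
  inner n (w i) (w j) = delta i j.
Proof. by move=> H /ltP hi /ltP hj; rewrite H. Qed.

Lemma inner_proj_l n p w x y :
  inner n (proj n p w x) y = rsum p (fun j => inner n x (w j) * inner n (w j) y).
Proof. exact: inner_sum_l. Qed.

Lemma inner_proj_frame n p w x i : orthonormal n p w -> (i < p)%N ->
  inner n (proj n p w x) (w i) = inner n x (w i).
Proof.
move=> H hi; rewrite inner_proj_l (rsum_ext _ _ (fun j => inner n x (w j) * delta j i)).
  exact: rsum_delta.
by move=> j hj; rewrite (orthonormal_delta n p).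
Qed.

Lemma norm2_proj_compl n p w x : orthonormal n p w ->
  inner n (fun k => x k - proj n p w x k) (fun k => x k - proj n p w x k) =
  inner n x x - rsum p (fun j => inner n x (w j) * inner n x (w j)).
Proof.
move=> H; set P := rsum p _.
have E1 : inner n (proj n p w x) x = P.
  by rewrite inner_proj_l; apply: rsum_ext => j _; rewrite (inner_sym n (w j)).
have E2 : inner n (proj n p w x) (proj n p w x) = P.
  rewrite inner_proj_l; apply: rsum_ext => j hj.
  by rewrite (inner_sym n (w j) (proj n p w x)) inner_proj_frame.
rewrite inner_sub_l (inner_sym n x) (inner_sym n (proj n p w x)) !inner_sub_l E1 E2.
by rewrite (inner_sym n x) E1; ring.
Qed.

Definition frame_entry n (S : mat) (w : nat -> vec) i j := inner n (mv n S (w i)) (w j).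

Lemma frame_entry_sym n S w i j : (forall i j, (i < n)%N -> (j < n)%N -> S i j = S j i) ->
  frame_entry n S w i j = frame_entry n S w j i.
Proof. by move=> H; rewrite /frame_entry inner_mv_sym // inner_sym. Qed.

Lemma trS1_frame n p w S : orthonormal n p w ->
  trS1 n p w S = rsum p (fun i => frame_entry n S w i i).
Proof. by move=> H; apply: rsum_ext => i hi; rewrite /S1op inner_proj_frame. Qed.

Lemma trS1sq_frame n p w S : orthonormal n p w ->
  (forall i j, (i < n)%N -> (j < n)%N -> S i j = S j i) ->
  trS1sq n p w S = rsum p (fun i => rsum p (fun j => frame_entry n S w i j ^ 2)).
Proof.
move=> H HS; apply: rsum_ext => i hi; rewrite /S1op inner_proj_frame //.
rewrite inner_mv_sym // inner_proj_l; apply: rsum_ext => j hj.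
by rewrite /frame_entry (inner_sym n (w j)); ring.
Qed.

Lemma trS2TS2_frame n p w S : orthonormal n p w ->
  trS2TS2 n p w S = rsum p (fun i => inner n (mv n S (w i)) (mv n S (w i)))
                    - rsum p (fun i => rsum p (fun j => frame_entry n S w i j ^ 2)).
Proof.
move=> H; rewrite -rsum_minus; apply: rsum_ext => i hi.
by rewrite /S2op norm2_proj_compl //; congr (_ - _); apply: rsum_ext => j _; rewrite /frame_entry; ring.
Qed.

Lemma in_span_choice n p (v x : nat -> vec) :
  (forall j, (j < p)%coq_nat -> in_span n p v (x j)) ->
  exists G : nat -> nat -> R, forall j k, (j < p)%N -> (k < n)%N ->
    x j k = rsum p (fun m => G j m * v m k).
Proof.
move=> H.
have H' j : exists c : nat -> R,
    (j < p)%N -> forall k, (k < n)%N -> x j k = rsum p (fun m => c m * v m k).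
  case: (ltnP j p) => hj; last by exists (fun _ => 0) => hj'; lia.
  by have [c hc] := H j (elimT ltP hj); exists c => _ k /ltP; apply: hc.
exists (fun j => proj1_sig (constructive_indefinite_description _ (H' j))) => j k hj hk.
exact: (proj2_sig (constructive_indefinite_description _ (H' j)) hj).
Qed.

Lemma mv_ext n M x y i : (forall k, (k < n)%N -> x k = y k) -> mv n M x i = mv n M y i.
Proof. by move=> H; apply: rsum_ext => k hk; rewrite H. Qed.

Lemma mv_sum n p M (c : nat -> R) (x : nat -> vec) i :
  mv n M (fun k => rsum p (fun m => c m * x m k)) i = rsum p (fun m => c m * mv n M (x m) i).
Proof.
rewrite /mv (rsum_ext _ _ (fun k => rsum p (fun m => c m * (M i k * x m k)))).
  by rewrite rsum_swap; apply: rsum_ext => m _; rewrite rsum_scal.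
by move=> k _; rewrite -rsum_scal; apply: rsum_ext => m _; ring.
Qed.

Definition gram n (x : nat -> vec) : mat := fun i j => inner n (x i) (x j).

Lemma det_gram_change n p (G : nat -> nat -> R) (x y : nat -> vec) :
  (forall j k, (j < p)%N -> (k < n)%N -> x j k = rsum p (fun m => G j m * y m k)) ->
  det p (gram n x) = Rsqr (det p G) * det p (gram n y).
Proof.
move=> H.
have E : mx p (gram n x) = mx p (mm p (mm p G (gram n y)) (transp G)).
  apply: mx_ext => i l hi hl; rewrite /gram (inner_ext n (x i)
    (fun k => rsum p (fun m => G i m * y m k)) (x l) (fun k => rsum p (fun m => G l m * y m k)));
    last 2 first; try by move=> k hk; apply: H.
  rewrite inner_sum_l /mm /transp.
  rewrite (rsum_ext _ _ (fun m => rsum p (fun q => G i m * inner n (y m) (y q) * G l q))).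
    rewrite rsum_swap; apply: rsum_ext => q _.
    by rewrite Rmult_comm -rsum_scal; apply: rsum_ext => m _; ring.
  move=> m _; rewrite inner_sym inner_sum_l -rsum_scal.
  by apply: rsum_ext => q _; rewrite inner_sym; ring.
by rewrite !det_mx E !mx_mm mx_transp !det_mulmx det_tr mulrAC /Rsqr; Rops_to_ring.
Qed.

Lemma det_change_frame_neq0 n p (G H : nat -> nat -> R) (x y : nat -> vec) :
  orthonormal n p y ->
  (forall j k, (j < p)%N -> (k < n)%N -> x j k = rsum p (fun m => G j m * y m k)) ->
  (forall i k, (i < p)%N -> (k < n)%N -> y i k = rsum p (fun m => H i m * x m k)) ->
  det p G <> 0.
Proof.
move=> Hy HG HH.
have E : mx p (mm p H G) = 1%:M%R.
  rewrite -R1E -mx_delta; apply: mx_ext => i l hi hl.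
  rewrite Rmult_1_l -(orthonormal_delta n p y) //.
  rewrite (inner_ext n (y i) (fun k => rsum p (fun m => H i m * x m k)) (y l) (y l));
    last 2 first; [by move=> k hk; apply: HH | by [] |].
  rewrite inner_sum_l; apply: rsum_ext => m hm; congr (_ * _).
  rewrite (inner_ext n (x m) (fun k => rsum p (fun q => G m q * y q k)) (y l) (y l));
    last 2 first; [by move=> k hk; apply: HG | by [] |].
  rewrite inner_sum_l (rsum_ext _ _ (fun q => G m q * delta q l)) ?rsum_delta // => q hq.
  by rewrite (orthonormal_delta n p).
move=> hG; have := congr1 (@determinant _ p) E.
rewrite mx_mm det_mulmx det1 -!det_mx hG mulr0 => /eqP.
by rewrite eq_sym oner_eq0.
Qed.

(** * Lagrange tensors *)

(* Pointwise algebra at [t]: [a, a1, a2, r] stand for [A_t, A_t', A_t'', R_t], [B] for [A_t^{-*}]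
   and [B1] for its derivative. *)
Section InverseAdjointAlgebra.
Local Open Scope ring_scope.
Variables (n : nat) (a a1 a2 r : 'M[R]_n).
Hypotheses (a_unit : a \in unitmx) (lagrange : a1^T *m a = a^T *m a1)
  (jacobi : a2 = - (r *m a)) (r_sym : r^T = r).

Let S := a1 *m invmx a.
Let B := invmx a^T.
Let B1 := - (B *m a1^T *m B).

Lemma lagrange_shape_sym : S^T = S.
Proof.
rewrite /S trmx_mul trmx_inv -[LHS](mulmxK a_unit); congr (_ *m _).
by rewrite -mulmxA lagrange mulmxA mulVmx ?unitmx_tr // mul1mx.
Qed.

Lemma inverse_adjoint_mul : B *m a^T = 1%:M.
Proof. by rewrite /B mulVmx // unitmx_tr. Qed.

Lemma inverse_adjoint_shape : B *m a1^T = S.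
Proof. by rewrite -lagrange_shape_sym /S trmx_mul trmx_inv. Qed.

Lemma inverse_adjoint_derivative_mul : B1 *m a^T = - S.
Proof. by rewrite /B1 mulNmx -(mulmxA (B *m a1^T)) inverse_adjoint_mul mulmx1 inverse_adjoint_shape. Qed.

Lemma inverse_adjoint_second_derivative_mul :
  - ((B1 *m a1^T + B *m a2^T) *m B + (B *m a1^T) *m B1) *m a^T = (S *m S) *+ 2 + r.
Proof.
have e1 : B1 *m a1^T = - (S *m S).
  by rewrite /B1 mulNmx -(mulmxA (B *m a1^T)) inverse_adjoint_shape.
have e2 : B *m a2^T = - r.
  by rewrite jacobi -mulNmx trmx_mul mulmxA inverse_adjoint_mul mul1mx linearN /= r_sym.
rewrite mulNmx mulmxDl -(mulmxA _ B) inverse_adjoint_mul mulmx1 -(mulmxA (B *m a1^T)).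
rewrite inverse_adjoint_derivative_mul inverse_adjoint_shape e1 e2 mulmxN.
by rewrite !opprD !opprK mulr2n addrAC addrC.
Qed.

End InverseAdjointAlgebra.

Lemma lagrange_mx n A A1 :
  (forall v u : vec, inner n (mv n A1 v) (mv n A u) = inner n (mv n A v) (mv n A1 u)) ->
  ((mx n A1)^T *m mx n A = (mx n A)^T *m mx n A1)%R.
Proof.
move=> H; rewrite -!mx_transp -!mx_mm; apply: mx_ext => j i hj hi.
have E (P Q : mat) : mm n (transp P) Q j i =
    inner n (mv n P (fun k => delta k j)) (mv n Q (fun k => delta k i)).
  by apply: rsum_ext => k hk; rewrite /mv !rsum_delta.
by rewrite !E H.
Qed.

Section LagrangeTensor.
Variables (n : nat) (a b : R) (A A1 A2 Rc : R -> mat) (t : R).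
Hypothesis A_C2 : forall s, a < s < b -> forall i j, (i < n)%coq_nat -> (j < n)%coq_nat ->
  derivable_pt_lim (fun u => A u i j) s (A1 s i j) /\
  derivable_pt_lim (fun u => A1 u i j) s (A2 s i j).
Hypothesis Rc_sym : forall s, a < s < b -> forall i j, (i < n)%coq_nat -> (j < n)%coq_nat ->
  Rc s i j = Rc s j i.
Hypothesis jacobi : forall s, a < s < b -> forall i j, (i < n)%coq_nat -> (j < n)%coq_nat ->
  A2 s i j + mm n (Rc s) (A s) i j = 0.
Hypothesis lagrange : forall s, a < s < b -> forall v u : vec,
  inner n (mv n (A1 s) v) (mv n (A s) u) = inner n (mv n (A s) v) (mv n (A1 s) u).
Hypotheses (t_in : a < t < b) (t_regular : det n (A t) <> 0).

Lemma is_derive_A s : a < s < b -> is_derive_mat n A (A1 s) s /\ is_derive_mat n A1 (A2 s) s.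
Proof. by move=> hs; split => i j /ltP hi /ltP hj; have [] := A_C2 s hs i j hi hj. Qed.

Lemma regular_near : exists d, 0 < d /\
  forall s, Rabs (s - t) < d -> a < s < b /\ det n (A s) <> 0.
Proof.
have [d [hd Hd]] := derivable_pt_lim_neq0_near _ _ _
  (derivable_pt_lim_det _ _ _ _ (proj1 (is_derive_A t t_in))) t_regular.
exists (Rmin d (Rmin (t - a) (b - t))); split.
  by apply: Rmin_glb_lt => //; apply: Rmin_glb_lt; lra.
move=> s /Rabs_def2 [hs1 hs2].
have := Rmin_l d (Rmin (t - a) (b - t)); have := Rmin_r d (Rmin (t - a) (b - t)).
have := Rmin_l (t - a) (b - t); have := Rmin_r (t - a) (b - t) => *.
by split; [lra | apply: Hd; apply: Rabs_def1; lra].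
Qed.

Definition Ainvstar' (s : R) : mat :=
  mopp (mm n (mm n (Ainvstar n A s) (transp (A1 s))) (Ainvstar n A s)).

Definition Ainvstar'' : mat :=
  mopp (madd (mm n (madd (mm n (Ainvstar' t) (transp (A1 t)))
                         (mm n (Ainvstar n A t) (transp (A2 t)))) (Ainvstar n A t))
             (mm n (mm n (Ainvstar n A t) (transp (A1 t))) (Ainvstar' t))).

Lemma is_derive_Ainvstar s : a < s < b -> det n (A s) <> 0 ->
  is_derive_mat n (Ainvstar n A) (Ainvstar' s) s.
Proof.
move=> hs hd; apply: (is_derive_inv n (fun s => transp (A s)) (transp (A1 s))).
- exact: is_derive_mat_transp (proj1 (is_derive_A s hs)).
- by rewrite det_transp.
Qed.

Lemma is_derive_Ainvstar' : is_derive_mat n Ainvstar' Ainvstar'' t.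
Proof.
have HB := is_derive_Ainvstar t t_in t_regular.
exact: (is_derive_mat_opp _ _ _ _ (is_derive_mat_mm _ _ _ _ _ _ (is_derive_mat_mm _ _ _ _ _ _
  HB (is_derive_mat_transp _ _ _ _ (proj2 (is_derive_A t t_in)))) HB)).
Qed.

Local Notation S := (Sop n A A1 t).

Let A_unit : (mx n (A t) \in unitmx)%R.
Proof. by rewrite unitmxE unitfE -det_mx; apply/eqP. Qed.

Let lagrange_t := lagrange_mx n (A t) (A1 t) (lagrange t t_in).

Let jacobi_t : mx n (A2 t) = (- (mx n (Rc t) *m mx n (A t)))%R.
Proof.
rewrite -mx_mm -mx_mopp; apply: mx_ext => i j /ltP hi /ltP hj.
by have := jacobi t t_in i j hi hj; rewrite /mopp; lra.
Qed.

Let Rc_sym_t : ((mx n (Rc t))^T = mx n (Rc t))%R.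
Proof. by apply: mx_sym => i j /ltP hi /ltP hj; apply: Rc_sym. Qed.

Lemma mx_Sop : mx n S = (mx n (A1 t) *m invmx (mx n (A t)))%R.
Proof. by rewrite /Sop mx_mm mx_inv. Qed.

Lemma Sop_sym i j : (i < n)%N -> (j < n)%N -> S i j = S j i.
Proof.
apply: (mx_inj n S (transp S)).
by rewrite mx_transp mx_Sop (lagrange_shape_sym _ _ _ A_unit lagrange_t).
Qed.

Let mx_Ainvstar : mx n (Ainvstar n A t) = invmx (mx n (A t))^T.
Proof.
rewrite /Ainvstar (mx_inv n (transp (A t))); first by rewrite mx_transp.
by rewrite det_transp.
Qed.

Let mx_Ainvstar' : mx n (Ainvstar' t) =
  (- (invmx (mx n (A t))^T *m (mx n (A1 t))^T *m invmx (mx n (A t))^T))%R.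
Proof. by rewrite /Ainvstar' mx_mopp !mx_mm mx_Ainvstar mx_transp. Qed.

Let mx_Ainvstar'' : mx n (Ainvstar'') =
  (- ((mx n (Ainvstar' t) *m (mx n (A1 t))^T + invmx (mx n (A t))^T *m (mx n (A2 t))^T)
      *m invmx (mx n (A t))^T
      + (invmx (mx n (A t))^T *m (mx n (A1 t))^T) *m mx n (Ainvstar' t)))%R.
Proof.
rewrite {1}/Ainvstar'' mx_mopp mx_madd (mx_mm n (madd _ _)) mx_madd !mx_mm.
by rewrite (mx_transp n (A1 t)) (mx_transp n (A2 t)) mx_Ainvstar.
Qed.

Lemma mv_Ainvstar_at w i : (i < n)%N ->
  mv n (Ainvstar n A t) (mv n (transp (A t)) w) i = w i.
Proof.
apply: cv_inj; rewrite !cv_mv mulmxA mx_Ainvstar mx_transp.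
by rewrite (inverse_adjoint_mul _ _ A_unit) mul1mx.
Qed.

Lemma mv_Ainvstar'_at w i : (i < n)%N ->
  mv n (Ainvstar' t) (mv n (transp (A t)) w) i = - mv n S w i.
Proof.
apply: (cv_inj n _ (fun i => - mv n S w i)).
rewrite !cv_mv mulmxA mx_Ainvstar' mx_transp.
rewrite (inverse_adjoint_derivative_mul _ _ _ A_unit lagrange_t) -mx_Sop mulNmx -cv_mv.
by apply/matrixP => k l; rewrite !mxE.
Qed.

Lemma mv_Ainvstar''_at w i : (i < n)%N ->
  mv n Ainvstar'' (mv n (transp (A t)) w) i
  = 2 * mv n S (mv n S w) i + mv n (Rc t) w i.
Proof.
apply: (cv_inj n _ (fun i => 2 * mv n S (mv n S w) i + mv n (Rc t) w i)).
have -> : cv n (fun i => 2 * mv n S (mv n S w) i + mv n (Rc t) w i) =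
    (cv n (mv n S (mv n S w)) *+ 2 + cv n (mv n (Rc t) w))%R.
  by apply/matrixP => k l; rewrite !mxE -!RplusE; ring.
rewrite (cv_mv n Ainvstar'') (cv_mv n (transp (A t))) mulmxA mx_Ainvstar'' mx_Ainvstar' mx_transp.
rewrite (inverse_adjoint_second_derivative_mul _ _ _ _ _ A_unit lagrange_t jacobi_t Rc_sym_t).
by rewrite -mx_Sop mulr2n !mulmxDl -!mulmxA -!cv_mv mulr2n.
Qed.

Section Frame.
Variables (p : nat) (w : nat -> vec).

Definition frame_curve (k : nat) (s : R) : vec := mv n (Ainvstar n A s) (mv n (transp (A t)) (w k)).
Definition frame_curve' (k : nat) (s : R) : vec := mv n (Ainvstar' s) (mv n (transp (A t)) (w k)).
Definition frame_curve'' (k : nat) : vec := mv n Ainvstar'' (mv n (transp (A t)) (w k)).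

Definition frame_gram (s : R) : mat :=
  fun i j => inner n (frame_curve i s) (frame_curve j s).
Definition frame_gram' (s : R) : mat :=
  fun i j => inner n (frame_curve' i s) (frame_curve j s) + inner n (frame_curve i s) (frame_curve' j s).
Definition frame_gram'' : mat := fun i j =>
  (inner n (frame_curve'' i) (frame_curve j t) + inner n (frame_curve' i t) (frame_curve' j t)) +
  (inner n (frame_curve' i t) (frame_curve' j t) + inner n (frame_curve i t) (frame_curve'' j)).

Lemma is_derive_frame_gram s : a < s < b -> det n (A s) <> 0 ->
  is_derive_mat p frame_gram (frame_gram' s) s.
Proof.
move=> hs hd i j _ _.
by apply: derivable_pt_lim_inner; apply: is_derive_mv; apply: is_derive_Ainvstar.
Qed.

Lemma is_derive_frame_gram' : is_derive_mat p frame_gram' frame_gram'' t.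
Proof.
have HB := is_derive_mv _ _ _ _ _ (is_derive_Ainvstar t t_in t_regular).
have HB' := is_derive_mv _ _ _ _ _ is_derive_Ainvstar'.
move=> i j _ _; apply: (derivable_pt_lim_plus _ _ _ _ _ (derivable_pt_lim_inner _ _ _ _ _ _ _ _)
  (derivable_pt_lim_inner _ _ _ _ _ _ _ _)); [exact: HB' | exact: HB | exact: HB | exact: HB'].
Qed.

Lemma frame_gram_at i j : orthonormal n p w -> (i < p)%N -> (j < p)%N ->
  frame_gram t i j = delta i j.
Proof.
move=> Hw hi hj; rewrite -(orthonormal_delta n p w) //.
by apply: inner_ext => k hk; exact: mv_Ainvstar_at.
Qed.

Lemma frame_gram'_at i j : frame_gram' t i j = -2 * frame_entry n S w i j.
Proof.
rewrite /frame_gram' /frame_entry.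
rewrite (inner_ext n (frame_curve' i t) (fun k => - mv n S (w i) k) _ (w j)); last 2 first.
- by move=> k hk; exact: mv_Ainvstar'_at.
- by move=> k hk; exact: mv_Ainvstar_at.
rewrite (inner_ext n (frame_curve i t) (w i) _ (fun k => - mv n S (w j) k)); last 2 first.
- by move=> k hk; exact: mv_Ainvstar_at.
- by move=> k hk; exact: mv_Ainvstar'_at.
rewrite inner_opp_l (inner_sym n (w i)) inner_opp_l inner_mv_sym; last exact: Sop_sym.
by rewrite (inner_sym n (mv n S (w j))); ring.
Qed.

Lemma frame_gram''_diag k :
  frame_gram'' k k = 6 * inner n (mv n S (w k)) (mv n S (w k)) + 2 * inner n (mv n (Rc t) (w k)) (w k).
Proof.
set P := inner n (mv n S (w k)) (mv n S (w k)).
have e1 : inner n (frame_curve'' k) (frame_curve k t) = 2 * P + inner n (mv n (Rc t) (w k)) (w k).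
  rewrite (inner_ext n _ (fun i => 2 * mv n S (mv n S (w k)) i + mv n (Rc t) (w k) i) _ (w k));
    last 2 first.
  - by move=> i hi; exact: mv_Ainvstar''_at.
  - by move=> i hi; exact: mv_Ainvstar_at.
  rewrite /P -inner_mv_sym; last exact: Sop_sym.
  by rewrite /inner -rsum_scal -rsum_plus; apply: rsum_ext => i _; ring.
have e2 : inner n (frame_curve' k t) (frame_curve' k t) = P.
  rewrite (inner_ext n _ (fun i => - mv n S (w k) i) _ (fun i => - mv n S (w k) i));
    try by move=> i hi; exact: mv_Ainvstar'_at.
  by rewrite inner_opp_l inner_sym inner_opp_l Ropp_involutive.
by rewrite /frame_gram'' e1 e2 (inner_sym n (frame_curve k t)) e1; ring.
Qed.

Lemma det_frame_gram_second_derivative : orthonormal n p w ->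
  exists (d : R) (h1 : R -> R), 0 < d /\
    (forall s, Rabs (s - t) < d -> derivable_pt_lim (fun s => det p (frame_gram s)) s (h1 s)) /\
    det p (frame_gram t) = 1 /\
    h1 t = -2 * trS1 n p w S /\
    derivable_pt_lim h1 t (4 * trS1 n p w S ^ 2 + 2 * trS1sq n p w S + 6 * trS2TS2 n p w S
                           + 2 * rsum p (fun i => inner n (mv n (Rc t) (w i)) (w i))).
Proof.
move=> Hw; have [d [hd Hd]] := regular_near.
have Ht : Rabs (t - t) < d by rewrite Rminus_diag_eq // Rabs_R0.
have HN s : Rabs (s - t) < d -> is_derive_mat p frame_gram (frame_gram' s) s.
  by move=> /Hd [hs1 hs2]; apply: is_derive_frame_gram.
have [h1 [Hh1 [Eh1 Hh2]]] := det_second_derivative_at_id p frame_gram frame_gram' frame_gram''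
  (fun s => Rabs (s - t) < d) t Ht (fun i j => frame_gram_at i j Hw) HN is_derive_frame_gram'.
have trN1 : rsum p (fun k => frame_gram' t k k) = -2 * trS1 n p w S.
  by rewrite (trS1_frame _ _ _ _ Hw) -rsum_scal; apply: rsum_ext => k _; rewrite frame_gram'_at.
have trN1sq : rsum p (fun k => rsum p (fun j => frame_gram' t k j * frame_gram' t j k)) =
    4 * rsum p (fun k => rsum p (fun j => frame_entry n S w k j ^ 2)).
  rewrite -rsum_scal; apply: rsum_ext => k _; rewrite -rsum_scal; apply: rsum_ext => j _.
  by rewrite !frame_gram'_at (frame_entry_sym n S w j k Sop_sym); ring.
have trN2 : rsum p (fun k => frame_gram'' k k) =
    6 * rsum p (fun k => inner n (mv n S (w k)) (mv n S (w k)))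
    + 2 * rsum p (fun k => inner n (mv n (Rc t) (w k)) (w k)).
  by rewrite -!rsum_scal -rsum_plus; apply: rsum_ext => k _; apply: frame_gram''_diag.
exists d, h1; split => //; split => //; split; [|split].
- rewrite det_mx (mx_ext p _ (fun i j => Rmult 1 (delta i j))) ?mx_delta ?det1 //.
  by move=> i j hi hj; rewrite frame_gram_at //; ring.
- by rewrite Eh1 trN1.
apply: derivable_pt_lim_eq Hh2.
rewrite trN1 trN1sq trN2 (trS1sq_frame _ _ _ _ Hw Sop_sym) (trS2TS2_frame _ _ _ _ Hw).
ring.
Qed.

End Frame.

Let mv_A_Ainvstar x k : (k < n)%N -> mv n (transp (A t)) (mv n (Ainvstar n A t) x) k = x k.
Proof.
apply: cv_inj; rewrite (cv_mv n (transp (A t))) (cv_mv n (Ainvstar n A t)) mulmxA mx_Ainvstar.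
by rewrite (mx_transp n (A t)) mulmxV ?unitmx_tr // mul1mx.
Qed.

Lemma det_Mgram_frame p e w : orthonormal n p w ->
  (forall i, (i < p)%coq_nat -> in_span n p (fun j => mv n (Ainvstar n A t) (e j)) (w i)) ->
  (forall j, (j < p)%coq_nat -> in_span n p w (mv n (Ainvstar n A t) (e j))) ->
  exists D, 0 < D /\ forall s, det p (Mgram n p A e s) = D * det p (frame_gram w s).
Proof.
move=> Hw Hsp1 Hsp2.
have [G HG] := in_span_choice n p w _ Hsp2.
have [H HH] := in_span_choice n p _ w Hsp1.
exists (Rsqr (det p G)); split.
  by apply: Rsqr_pos_lt; apply: (det_change_frame_neq0 n p G H _ w Hw HG HH).
move=> s; apply: (det_gram_change n p G (fun j => mv n (Ainvstar n A s) (e j))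
  (fun k => frame_curve w k s)) => j k hj hk.
rewrite (mv_ext n _ (e j) (fun k => rsum p (fun m => G j m * mv n (transp (A t)) (w m) k)));
  first exact: mv_sum.
move=> k' hk'; rewrite -mv_A_Ainvstar // -mv_sum; apply: mv_ext => k'' hk''.
exact: HG.
Qed.

Lemma det_Mgram_second_derivative p e w : orthonormal n p w ->
  (forall i, (i < p)%coq_nat -> in_span n p (fun j => mv n (Ainvstar n A t) (e j)) (w i)) ->
  (forall j, (j < p)%coq_nat -> in_span n p w (mv n (Ainvstar n A t) (e j))) ->
  exists (d : R) (h1 : R -> R) (h2 : R), 0 < d /\
    (forall s, Rabs (s - t) < d -> derivable_pt_lim (fun s => det p (Mgram n p A e s)) s (h1 s)) /\
    derivable_pt_lim h1 t h2 /\ 0 < det p (Mgram n p A e t) /\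
    h1 t = -2 * trS1 n p w S * det p (Mgram n p A e t) /\
    h2 = (4 * trS1 n p w S ^ 2 + 2 * trS1sq n p w S + 6 * trS2TS2 n p w S
          + 2 * rsum p (fun i => inner n (mv n (Rc t) (w i)) (w i))) * det p (Mgram n p A e t).
Proof.
move=> Hw Hsp1 Hsp2.
have [D [hD HD]] := det_Mgram_frame p e w Hw Hsp1 Hsp2.
have [d [h1 [hd [Hh1 [Ht [E1 Hh2]]]]]] := det_frame_gram_second_derivative p w Hw.
exists d, (fun s => D * h1 s); eexists; split => //; split; [|split; [|split; [|split]]].
- move=> s hs; apply: (derivable_pt_lim_ext (fun s => D * det p (frame_gram w s))) => [s'|].
    by rewrite HD.
  exact: derivable_pt_lim_scal_l (Hh1 s hs).
- exact: derivable_pt_lim_scal_l Hh2.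
- by rewrite HD Ht Rmult_1_r.
- by rewrite HD Ht E1; ring.
- by rewrite HD Ht; ring.
Qed.

End LagrangeTensor.

End LagrangeGram.

Theorem proposition2p1
  (n p : nat) (a b t0 : R) (A A1 A2 Rc : R -> mat) (e w : nat -> vec) (t : R) :
  a < t0 < b ->
  (* A is a C^2 family on I = (a,b) with A' = A1, A'' = A2 *)
  (forall s, a < s < b -> forall i j, (i < n)%nat -> (j < n)%nat ->
     derivable_pt_lim (fun u => A u i j) s (A1 s i j) /\
     derivable_pt_lim (fun u => A1 u i j) s (A2 s i j)) ->
  (forall s, a < s < b -> forall i j, (i < n)%nat -> (j < n)%nat ->
     Rc s i j = Rc s j i) ->
  (forall s, a < s < b -> forall i j, (i < n)%nat -> (j < n)%nat ->
     A2 s i j + mm n (Rc s) (A s) i j = 0) ->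
  (forall v : vec,
     (forall i, (i < n)%nat -> mv n (A t0) v i = 0 /\ mv n (A1 t0) v i = 0) ->
     forall i, (i < n)%nat -> v i = 0) ->
  (forall s, a < s < b -> forall v u : vec,
     inner n (mv n (A1 s) v) (mv n (A s) u) = inner n (mv n (A s) v) (mv n (A1 s) u)) ->
  (* W ⊂ E_{t0} p-dimensional with orthonormal basis e_1..e_p *)
  (1 <= p <= n)%nat ->
  orthonormal n p e ->
  a < t < b -> det n (A t) <> 0 ->
  (* w_1..w_p orthonormal basis of W_t = A_t^{-*} W *)
  orthonormal n p w ->
  (forall i, (i < p)%nat -> in_span n p (fun j => mv n (Ainvstar n A t) (e j)) (w i)) ->
  (forall j, (j < p)%nat -> in_span n p w (mv n (Ainvstar n A t) (e j))) ->
  exists (delta : R) (g1 : R -> R) (g2 : R),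
    0 < delta /\
    (forall s, Rabs (s - t) < delta -> derivable_pt_lim (gW n p A e) s (g1 s)) /\
    derivable_pt_lim g1 t g2 /\
    INR p * (g2 / gW n p A e t) =
      / INR p * (trS1 n p w (Sop n A A1 t)) ^ 2
      - trS1sq n p w (Sop n A A1 t)
      - 3 * trS2TS2 n p w (Sop n A A1 t)
      - rsum p (fun i => inner n (mv n (Rc t) (w i)) (w i)).
Proof.
intros _ HA HRc HJ _ HL Hp _ Ht Hdet Hw Hspan1 Hspan2.
destruct (LagrangeGram.det_Mgram_second_derivative n a b A A1 A2 Rc t HA HRc HJ HL Ht Hdet
            p e w Hw Hspan1 Hspan2) as (d & h1 & h2 & Hd & Hh1 & Hh2 & Hpos & E1 & E2).
destruct (LagrangeGram.Rpower_second_derivative (fun s => det p (Mgram n p A e s)) h1 h2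
            (- / (2 * INR p)) t d Hd Hpos Hh1 Hh2) as (delta & g1 & g2 & Hdelta & Hg1 & Hg2 & E).
exists delta, g1, g2; repeat split; try assumption.
assert (INR p <> 0) by (apply not_0_INR; lia).
assert (0 < gW n p A e t) by apply exp_pos.
unfold gW in *; rewrite E, E1, E2; field; lra.
Qed.
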